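(* Let $n\ge 1$ and let $U\in\mathcal{C}_2^{(n)}$ be a Clifford unitary with Pauli periodicity $m\ge 1$. Then the controlled gate $CU$ lies strictly in level $m+2$ of the $(n+1)$-qubit Clifford hierarchy: $$CU\in\mathcal{C}_{m+2}^{(n+1)}\setminus\mathcal{C}_{m+1}^{(n+1)}.$$
   Context: The $n$-qubit Pauli group is $\mathcal{P}_n=\{\omega P_1\otimes\cdots\otimes P_n:\ \omega\in\{\pm1,\pm \mathrm{i}\},\ P_j\in\{I,X,Y,Z\}\}$. The Clifford hierarchy: $\mathcal{C}_1^{(n)}:=\mathcal{P}_n$, $\mathcal{C}_{k+1}^{(n)}:=\{U\in U(2^n):\ UPU^\dagger\in\mathcal{C}_k^{(n)}\ \forall P\in\mathcal{P}_n\}$; $\mathcal{C}_2^{(n)}$ is the Clifford group. For $U\in U(2^n)$, the controlled gate is $CU:=\ket{0}\!\bra{0}\otimes I_{2^n}+\ket{1}\!\bra{1}\otimes U\in U(2^{n+1})$ (first qubit is the control). A unitary $U$ is Pauli-periodic if $U^{2^t}\in\mathcal{P}_n$ for some integer $t\ge0$, and its Pauli periodicity is $m=\min\{t\ge 0:\ U^{2^t}\in\mathcal{P}_n\}$ (membership in $\mathcal{P}_n$ exactly, i.e. with phase in $\{\pm1,\pm\mathrm{i}\}$). *)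

(* Complex scalars: an arbitrary numClosedFieldType C
   (e.g. algC, or the complex numbers R[i] over a real closed field). *)
From HB Require Import structures.
From mathcomp Require Import all_boot all_order all_algebra.
Set Implicit Arguments. Unset Strict Implicit. Unset Printing Implicit Defensive.
Import Order.TTheory GRing.Theory Num.Theory.
Local Open Scope ring_scope.

Section Qubits.
Variable C : numClosedFieldType.

(* Entry (a,b) (row bit a, column bit b) of the single-qubit Pauli
   matrix number k : 0 = I, 1 = X, 2 = Y, 3 = Z. *)
Definition sigma (k : 'I_4) (a b : bool) : C :=
  match val k with
  | 0 => if a == b then 1 else 0
  | 1 => if a == b then 0 else 1
  | 2 => if a == b then 0 else if a then 'i else - 'i
  | _ => if a == b then (if a then -1 else 1) else 0
  end.

Definition bit (j r : nat) : bool := odd (r %/ 2 ^ j).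

(* The Pauli string  i^w * sigma_{p_0} (x) ... (x) sigma_{p_{n-1}},
   written out entrywise (qubit j <-> bit j of the basis index). *)
Definition pauli_mx (n : nat) (w : 'I_4) (p : 'I_n -> 'I_4) : 'M[C]_(2 ^ n) :=
  \matrix_(r, c) ('i ^+ w * \prod_(j < n) sigma (p j) (bit j r) (bit j c)).

Definition is_pauli (n : nat) (P : 'M[C]_(2 ^ n)) : Prop :=
  exists (w : 'I_4) (p : 'I_n -> 'I_4), P = pauli_mx w p.

Definition adj (d : nat) (U : 'M[C]_d) : 'M[C]_d := (map_mx Num.conj U)^T.

Definition unitary (d : nat) (U : 'M[C]_d) : Prop := U *m adj U = 1%:M.

(* hier_aux k = level k+1 of the Clifford hierarchy *)
Fixpoint hier_aux (k n : nat) (U : 'M[C]_(2 ^ n)) : Prop :=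
  match k with
  | 0 => is_pauli U
  | k'.+1 => unitary U /\
             forall P : 'M[C]_(2 ^ n), is_pauli P -> hier_aux k' (U *m P *m adj U)
  end.

Definition in_clifford_hierarchy (k n : nat) (U : 'M[C]_(2 ^ n)) : Prop :=
  hier_aux k.-1 U.

Definition mxpow (d : nat) (U : 'M[C]_d) (e : nat) : 'M[C]_d :=
  iter e (mulmx U) 1%:M.

Definition pauli_periodicity (n : nat) (U : 'M[C]_(2 ^ n)) (m : nat) : Prop :=
  is_pauli (mxpow U (2 ^ m)) /\ forall t, (t < m)%N -> ~ is_pauli (mxpow U (2 ^ t)).

Lemma two_exp_succ (n : nat) : (2 ^ n + 2 ^ n = 2 ^ n.+1)%N.
Proof. by rewrite expnS mul2n addnn. Qed.

(* Controlled gate CU = |0><0| (x) I + |1><1| (x) U, first qubit = control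
   (the most significant bit of the basis index). *)
Definition ctrl (n : nat) (U : 'M[C]_(2 ^ n)) : 'M[C]_(2 ^ n.+1) :=
  castmx (two_exp_succ n, two_exp_succ n) (block_mx 1%:M 0 0 U).

End Qubits.

From mathcomp Require Import all_boot all_order all_algebra.
From mathcomp Require Import ring.
Set Implicit Arguments. Unset Strict Implicit. Unset Printing Implicit Defensive.
Import Order.TTheory GRing.Theory Num.Theory.
Local Open Scope ring_scope.

(* The level of C(U) is computed by a recursion that squares U.  Assume U and U† are
   Clifford and write an (n+1)-qubit Pauli operator as (s ⊗ 1)(1 ⊗ Q) with s a one-qubit
   Pauli matrix.  Conjugation by C(U) sends 1 ⊗ Q to the Clifford operator
   (1 ⊗ Q) C(Q† U Q U†), fixes s ⊗ 1 when s is diagonal (I or Z), and sends it to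
   (1 ⊗ U†) C(U²) (s ⊗ 1) when s is off-diagonal (X or Y).  Multiplication by Clifford
   operators preserves every level of the hierarchy from the second one on, so C(U) lies
   in level k+2 iff C(U²) lies in level k+1.  At the bottom, C(U) is Clifford iff U is a
   Pauli operator, because C(U) (X ⊗ 1) C(U)† has off-diagonal blocks U† and U.  Hence
   C(U) lies in level k+1 iff U^(2^k) is a Pauli operator, and the Pauli periodicity m of
   U puts C(U) in level m+2 but not in level m+1. *)

Section SquareCast.
Variables (R : pzRingType) (m m' : nat) (e : m = m').

Lemma castmx_mul (A B : 'M[R]_m) :
  castmx (e, e) (A *m B) = castmx (e, e) A *m castmx (e, e) B.
Proof. by case: m' / e; rewrite !castmx_id. Qed.

Lemma castmx_scale (a : R) (A : 'M[R]_m) :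
  castmx (e, e) (a *: A) = a *: castmx (e, e) A.
Proof. by case: m' / e; rewrite !castmx_id. Qed.

Lemma castmx_scalar (a : R) : castmx (e, e) (a%:M : 'M[R]_m) = a%:M.
Proof. by case: m' / e; rewrite !castmx_id. Qed.

End SquareCast.

Section Adjoint.
Variable C : numClosedFieldType.
Implicit Type d : nat.

Lemma adjM d (A B : 'M[C]_d) : adj (A *m B) = adj B *m adj A.
Proof. by rewrite /adj map_mxM trmx_mul. Qed.

Lemma adjK d : involutive (@adj C d).
Proof. by move=> A; apply/matrixP=> i j; rewrite !mxE conjCK. Qed.

Lemma adjZ d a (A : 'M[C]_d) : adj (a *: A) = a^* *: adj A.
Proof. by apply/matrixP=> i j; rewrite !mxE rmorphM. Qed.

Lemma adj0 d : adj (0 : 'M[C]_d) = 0.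
Proof. by apply/matrixP=> i j; rewrite !mxE conjC0. Qed.

Lemma adj_scalar d (a : C) : adj (a%:M : 'M[C]_d) = a^*%:M.
Proof.
by apply/matrixP=> i j; rewrite !mxE eq_sym; case: eqP; rewrite ?conjC0.
Qed.

Lemma adj1 d : adj (1%:M : 'M[C]_d) = 1%:M.
Proof. by rewrite adj_scalar conjC1. Qed.

Lemma castmx_adj d d' (e : d = d') (A : 'M[C]_d) :
  castmx (e, e) (adj A) = adj (castmx (e, e) A).
Proof. by case: d' / e; rewrite !castmx_id. Qed.

Lemma unitaryV d (U : 'M[C]_d) : unitary U -> adj U *m U = 1%:M.
Proof. exact: mulmx1C. Qed.

Lemma unitaryM d (U V : 'M[C]_d) : unitary U -> unitary V -> unitary (U *m V).
Proof. by rewrite /unitary adjM mulmxA -(mulmxA U) => hU ->; rewrite mulmx1. Qed.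

Lemma unitary_conjM d (U A B : 'M[C]_d) : unitary U ->
  U *m (A *m B) *m adj U = (U *m A *m adj U) *m (U *m B *m adj U).
Proof. by move/unitaryV=> hU; rewrite -!mulmxA (mulmxA (adj U)) hU mul1mx. Qed.

End Adjoint.

Ltac mx_simpl := rewrite ?(mul1mx, mulmx1, mul0mx, mulmx0, addr0, add0r, scale0r,
  scale1r, scaler0, mul0r, mulr0, mul1r, mulr1, oppr0, adj0, adj1).

Section Blocks.
Variables (C : numClosedFieldType) (n : nat).
Implicit Types A B D E U : 'M[C]_(2 ^ n).

Definition blk A B D E : 'M[C]_(2 ^ n.+1) :=
  castmx (two_exp_succ n, two_exp_succ n) (block_mx A B D E).

Lemma ctrlE U : ctrl U = blk 1%:M 0 0 U.
Proof. by []. Qed.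

Lemma blk_mul A B D E A' B' D' E' :
  blk A B D E *m blk A' B' D' E' =
  blk (A *m A' + B *m D') (A *m B' + B *m E') (D *m A' + E *m D') (D *m B' + E *m E').
Proof. by rewrite /blk -castmx_mul mulmx_block. Qed.

Lemma blk_adj A B D E : adj (blk A B D E) = blk (adj A) (adj D) (adj B) (adj E).
Proof. by rewrite /blk -castmx_adj /adj map_block_mx tr_block_mx. Qed.

Lemma blk_inj A B D E A' B' D' E' :
  blk A B D E = blk A' B' D' E' -> [/\ A = A', B = B', D = D' & E = E'].
Proof. by move/(can_inj (castmxK _ _))/eq_block_mx. Qed.

Lemma blk1 : blk 1%:M 0 0 1%:M = 1%:M.
Proof. by rewrite /blk -scalar_mx_block castmx_scalar. Qed.

Lemma blk_scale c A B D E : c *: blk A B D E = blk (c *: A) (c *: B) (c *: D) (c *: E).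
Proof. by rewrite /blk -castmx_scale scale_block_mx. Qed.

End Blocks.

Section Kron2.
Variable C : numClosedFieldType.
Implicit Types A B : bool -> bool -> C.

Definition mul2 A B a b := A a false * B false b + A a true * B true b.

(* [kron2 A M] is the Kronecker product A ⊗ M, where the 2 x 2 matrix A acts on the
   new most significant qubit. *)
Definition kron2 n A (M : 'M[C]_(2 ^ n)) : 'M[C]_(2 ^ n.+1) :=
  blk (A false false *: M) (A false true *: M) (A true false *: M) (A true true *: M).

Variable n : nat.
Implicit Types M N : 'M[C]_(2 ^ n).

Lemma kron2_mul A B M N : kron2 A M *m kron2 B N = kron2 (mul2 A B) (M *m N).
Proof.
rewrite /kron2 blk_mul /mul2; congr blk;
  by rewrite -!scalemxAl -!scalemxAr !scalerA scalerDl.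
Qed.

Lemma kron2_adj A M : adj (kron2 A M) = kron2 (fun a b => (A b a)^*) (adj M).
Proof. by rewrite /kron2 blk_adj !adjZ. Qed.

Lemma eq_kron2 A B M : A =2 B -> kron2 A M = kron2 B M.
Proof. by move=> eqAB; rewrite /kron2 !eqAB. Qed.

Lemma kron2_scalel c A M : kron2 (fun a b => c * A a b) M = kron2 A (c *: M).
Proof. by rewrite /kron2 !scalerA; congr blk; rewrite mulrC. Qed.

Lemma kron2_scaler c A M : kron2 A (c *: M) = c *: kron2 A M.
Proof. by rewrite /kron2 blk_scale !scalerA; congr blk; rewrite mulrC. Qed.

Lemma kron2_1 : kron2 (fun a b => (a == b)%:R) (1%:M : 'M[C]_(2 ^ n)) = 1%:M.
Proof. by rewrite /kron2 /= scale1r scale0r blk1. Qed.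

End Kron2.

Section Phases.
Variable C : numClosedFieldType.

Definition is_phase (x : C) := exists j : nat, x = 'i ^+ j.

Lemma is_phase1 : is_phase 1. Proof. by exists 0%N. Qed.
Lemma is_phase_i : is_phase 'i. Proof. by exists 1%N. Qed.

Lemma is_phase_sign b : is_phase ((-1) ^+ b).
Proof. by exists (2 * b)%N; rewrite exprM sqrCi. Qed.

Lemma conjCN (x : C) : (- x)^* = - x^*.
Proof. exact: rmorphN. Qed.

Lemma mulCii : 'i * 'i = -1 :> C.
Proof. by rewrite -expr2 sqrCi. Qed.

Lemma is_phase_normC x : is_phase x -> x^* * x = 1.
Proof. by move=> [j ->]; rewrite rmorphXn /= conjCi -exprMn mulNr mulCii opprK expr1n. Qed.

Lemma is_phaseNi : is_phase (- 'i : C).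
Proof. by exists 3%N; rewrite exprS sqrCi mulrN1. Qed.

Lemma expCi_mod4 k : 'i ^+ (k %% 4) = 'i ^+ k :> C.
Proof.
have i4 : 'i ^+ 4 = 1 :> C by rewrite (exprM _ 2 2) sqrCi sqrrN expr1n.
by rewrite {2}(divn_eq k 4) exprD mulnC exprM i4 expr1n mul1r.
Qed.

End Phases.

Notation pI := (@Ordinal 4 0 isT).
Notation pX := (@Ordinal 4 1 isT).
Notation pY := (@Ordinal 4 2 isT).
Notation pZ := (@Ordinal 4 3 isT).

Ltac case_pauli k := case: k => [[|[|[|[|?]]]] ?] //.

Section SingleQubit.
Variable C : numClosedFieldType.
Implicit Type k : 'I_4.

Local Ltac sigma_simpl := rewrite ?/mul2 /sigma /=;
  rewrite ?(mul0r, mulr0, mul1r, mulr1, add0r, addr0, mulrN, mulNr, opprK, oppr0,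
            mulN1r, mulrN1, conjC0, conjC1, conjCi, conjCN, mulCii) //.

Lemma sigma_mul k k' : exists c, exists2 phi, is_phase phi &
  forall a b, mul2 (sigma C k) (sigma C k') a b = phi * sigma C c a b.
Proof.
have phN1 : is_phase (-1 : C) by exists 2%N; rewrite sqrCi.
(* The Pauli multiplication table, row k, column k'. *)
case_pauli k; case_pauli k'; [
  exists pI, 1 | exists pX, 1 | exists pY, 1 | exists pZ, 1
| exists pX, 1 | exists pI, 1 | exists pZ, 'i | exists pY, (- 'i)
| exists pY, 1 | exists pZ, (- 'i) | exists pI, 1 | exists pX, 'i
| exists pZ, 1 | exists pY, 'i | exists pX, (- 'i) | exists pI, 1 ];
  first [exact: is_phase1 | exact: is_phase_i | exact: phN1 | exact: is_phaseNi
        | by case; case; sigma_simpl].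
Qed.

Lemma sigma_commute k k' a c :
  mul2 (sigma C k) (sigma C k') a c =
  (-1) ^+ (~~ [|| k == pI, k' == pI | k == k']) * mul2 (sigma C k') (sigma C k) a c.
Proof. by case_pauli k; case_pauli k'; case: a; case: c; sigma_simpl. Qed.

Lemma sigma_adj k a b : (sigma C k b a)^* = sigma C k a b.
Proof. by case_pauli k; case: a; case: b; sigma_simpl. Qed.

Lemma sigma_sqr k a b : mul2 (sigma C k) (sigma C k) a b = (a == b)%:R.
Proof. by case_pauli k; case: a; case: b; sigma_simpl. Qed.

Lemma mul2_sigmaIl A a b : mul2 (sigma C pI) A a b = A a b.
Proof. by case: a; sigma_simpl. Qed.

Lemma mul2_sigmaIr A a b : mul2 A (sigma C pI) a b = A a b.
Proof. by case: b; sigma_simpl. Qed.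

Lemma sigma_diag_or_offdiag k :
  (sigma C k false true = 0 /\ sigma C k true false = 0) \/
  (sigma C k false false = 0 /\ sigma C k true true = 0).
Proof. by case_pauli k; [left | right | right | left]. Qed.

End SingleQubit.

Lemma bit_small n k : (k < 2 ^ n)%N -> bit n k = false.
Proof. by move=> lt_k; rewrite /bit divn_small. Qed.

Lemma bit_add_exp n k : (k < 2 ^ n)%N -> bit n (2 ^ n + k) = true.
Proof. by move=> lt_k; rewrite /bit divnDl // divnn expn_gt0 /= divn_small. Qed.

Lemma bit_add_exp_low n i k : (i < n)%N -> bit i (2 ^ n + k) = bit i k.
Proof.
move=> lt_in; rewrite /bit divnDl ?dvdn_exp2l ?(ltnW lt_in) // -expnB ?(ltnW lt_in) //.
by rewrite oddD oddX subn_eq0 leqNgt lt_in.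
Qed.

Lemma bit_split n (x : 'I_(2 ^ n + 2 ^ n)) : exists (y : 'I_(2 ^ n)) (h : bool),
  [/\ forall j : 'I_n, bit j x = bit j y, bit n x = h
    & x = if h then rshift _ y else lshift _ y].
Proof.
case: (splitP x) => y xE; [exists y, false | exists y, true].
  by split; [move=> j; rewrite xE | rewrite xE bit_small | apply: val_inj].
by split; [move=> j; rewrite xE bit_add_exp_low | rewrite xE bit_add_exp | apply: val_inj].
Qed.

Section PauliStrings.
Variable C : numClosedFieldType.

Lemma pauli_mx_kron2 n (w : 'I_4) (p : 'I_n.+1 -> 'I_4) :
  pauli_mx C w p =
  kron2 (sigma C (p ord_max)) (pauli_mx C w (fun j => p (widen_ord (leqnSn n) j))).
Proof.
apply/matrixP => r c; rewrite /kron2 /blk castmxE mxE big_ord_recr /=.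
have [r1 [hr [Br -> ->]]] := bit_split (cast_ord (esym (two_exp_succ n)) r).
have [c1 [hc [Bc -> ->]]] := bit_split (cast_ord (esym (two_exp_succ n)) c).
under eq_bigr => j _ do rewrite [bit _ r](Br j) [bit _ c](Bc j).
by case: hr; case: hc;
  rewrite ?block_mxEul ?block_mxEur ?block_mxEdl ?block_mxEdr !mxE; ring.
Qed.

Lemma eq_pauli_mx n w (p q : 'I_n -> 'I_4) : p =1 q -> pauli_mx C w p = pauli_mx C w q.
Proof. by move=> epq; apply/matrixP=> r c; rewrite !mxE; under eq_bigr do rewrite epq. Qed.

Lemma pauli_kron2 n k (M : 'M[C]_(2 ^ n)) : is_pauli M -> is_pauli (kron2 (sigma C k) M).
Proof.
move=> [w [q ->]]; exists w, (fun j => oapp q k (unlift ord_max j)).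
rewrite pauli_mx_kron2 unlift_none; congr kron2; apply: eq_pauli_mx => j /=.
suff -> : widen_ord (leqnSn n) j = lift ord_max j by rewrite liftK.
by apply: val_inj; rewrite /= /bump leqNgt ltn_ord.
Qed.

Lemma pauliSP n (P : 'M[C]_(2 ^ n.+1)) :
  is_pauli P -> exists k (M : 'M[C]_(2 ^ n)), is_pauli M /\ P = kron2 (sigma C k) M.
Proof.
by move=> [w [p ->]]; rewrite pauli_mx_kron2; do 2 eexists; split; first do 2 eexists.
Qed.

Lemma pauli0P (P : 'M[C]_(2 ^ 0)) : is_pauli P <-> exists j, P = ('i ^+ j)%:M.
Proof.
have scalarE j :
    ('i ^+ j)%:M = pauli_mx C (Ordinal (ltn_pmod j (isT : 0 < 4)%N)) (fun _ : 'I_0 => ord0).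
  apply/matrixP=> r c; rewrite !mxE big_ord0 mulr1 /= expCi_mod4.
  by rewrite (ord1 r) (ord1 c) eqxx mulr1n.
split=> [[w [p ->]] | [j ->]]; last by rewrite scalarE; do 2 eexists.
exists w; rewrite scalarE.
have -> : Ordinal (ltn_pmod w (isT : 0 < 4)%N) = w by apply: val_inj; rewrite /= modn_small.
by apply: eq_pauli_mx => -[].
Qed.

Lemma pauli_scale n phi (P : 'M[C]_(2 ^ n)) :
  is_phase phi -> is_pauli P -> is_pauli (phi *: P).
Proof.
move=> [j ->] [w [p ->]]; exists (Ordinal (ltn_pmod (j + w) (isT : 0 < 4)%N)), p.
by apply/matrixP=> r c; rewrite !mxE /= expCi_mod4 exprD mulrA.
Qed.

Lemma pauli_mul n (P Q : 'M[C]_(2 ^ n)) : is_pauli P -> is_pauli Q -> is_pauli (P *m Q).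
Proof.
elim: n P Q => [|n IH] P Q.
  move=> /pauli0P [a ->] /pauli0P [b ->]; apply/pauli0P.
  by exists (a + b)%N; rewrite -scalar_mxM exprD.
move=> /pauliSP [k [M [pM ->]]] /pauliSP [k' [N [pN ->]]].
have [c [phi phase_phi kk'E]] := sigma_mul C k k'.
rewrite kron2_mul (eq_kron2 _ kk'E) kron2_scalel.
exact/pauli_kron2/pauli_scale/IH.
Qed.

Lemma pauli_adj_sign n (P : 'M[C]_(2 ^ n)) :
  is_pauli P -> exists b : bool, adj P = (-1) ^+ b *: P.
Proof.
elim: n P => [|n IH] P.
  move=> /pauli0P [j ->]; exists (odd j); rewrite signr_odd adj_scalar rmorphXn /= conjCi.
  by rewrite scale_scalar_mx -exprMn mulN1r.
move=> /pauliSP [k [M [pM ->]]]; have [b Mb] := IH M pM.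
by exists b; rewrite kron2_adj (eq_kron2 _ (sigma_adj C k)) Mb kron2_scaler.
Qed.

Lemma pauli_adj n (P : 'M[C]_(2 ^ n)) : is_pauli P -> is_pauli (adj P).
Proof.
by move=> pP; have [b ->] := pauli_adj_sign pP; apply: pauli_scale (is_phase_sign C b) pP.
Qed.

Lemma pauli_unitary n (P : 'M[C]_(2 ^ n)) : is_pauli P -> unitary P.
Proof.
rewrite /unitary; elim: n P => [|n IH] P.
  move=> /pauli0P [j ->]; rewrite adj_scalar -scalar_mxM mulrC is_phase_normC //.
  by exists j.
move=> /pauliSP [k [M [pM ->]]].
rewrite kron2_adj (eq_kron2 _ (sigma_adj C k)) kron2_mul IH //.
by rewrite (eq_kron2 _ (sigma_sqr C k)) kron2_1.
Qed.

Lemma pauli_commute n (P Q : 'M[C]_(2 ^ n)) : is_pauli P -> is_pauli Q ->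
  exists b : bool, P *m Q = (-1) ^+ b *: (Q *m P).
Proof.
elim: n P Q => [|n IH] P Q.
  move=> /pauli0P [a ->] /pauli0P [b ->]; exists false.
  by rewrite scale1r -!scalar_mxM mulrC.
move=> /pauliSP [k [M [pM ->]]] /pauliSP [k' [N [pN ->]]].
have [b MN] := IH M N pM pN.
eexists; rewrite !kron2_mul (eq_kron2 _ (sigma_commute C k k')) kron2_scalel MN.
by rewrite !kron2_scaler scalerA -signr_addb.
Qed.

Lemma pauli1 n : is_pauli (1%:M : 'M[C]_(2 ^ n)).
Proof.
have pP : is_pauli (pauli_mx C ord0 (fun _ : 'I_n => ord0)) by do 2 eexists.
by rewrite -(pauli_unitary pP); apply: pauli_mul pP (pauli_adj pP).
Qed.

Lemma pauli_neq0 n (P : 'M[C]_(2 ^ n)) : is_pauli P -> P != 0.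
Proof.
move=> pP; apply/eqP=> P0; move: (pauli_unitary pP); rewrite /unitary P0 mul0mx.
move/matrixP/(_ (Ordinal (expn_gt0 2 n)) (Ordinal (expn_gt0 2 n))).
by rewrite !mxE eqxx /= => /eqP; rewrite eq_sym oner_eq0.
Qed.

End PauliStrings.

Section CliffordGroup.
Variables (C : numClosedFieldType) (n : nat).
Implicit Types K P U W : 'M[C]_(2 ^ n).

Definition clifford U := hier_aux 1 U.

(* Closure of the Clifford group under [adj] holds but is not proved here, so the
   membership of [adj U] is carried along explicitly. *)
Definition biclifford U := clifford U /\ clifford (adj U).

Lemma clifford_unitary U : clifford U -> unitary U.
Proof. by case. Qed.

Lemma clifford_conj_pauli U P : clifford U -> is_pauli P -> is_pauli (U *m P *m adj U).
Proof. by case=> _ /[apply]. Qed.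

Lemma pauli_clifford P : is_pauli P -> clifford P.
Proof.
move=> pP; split=> [|Q pQ]; first exact: pauli_unitary.
exact: pauli_mul (pauli_mul pP pQ) (pauli_adj pP).
Qed.

Lemma clifford_mul U W : clifford U -> clifford W -> clifford (U *m W).
Proof.
move=> cU cW; split=> [|P pP].
  exact: unitaryM (clifford_unitary cU) (clifford_unitary cW).
rewrite adjM (_ : _ *m _ *m _ = U *m (W *m P *m adj W) *m adj U);
  last by rewrite !mulmxA.
exact: clifford_conj_pauli cU (clifford_conj_pauli cW pP).
Qed.

Lemma biclifford_mul U W : biclifford U -> biclifford W -> biclifford (U *m W).
Proof. by move=> [cU cU'] [cW cW']; split; rewrite ?adjM; apply: clifford_mul. Qed.

Lemma biclifford_adj U : biclifford U -> biclifford (adj U).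
Proof. by move=> [cU cU']; split; rewrite ?adjK. Qed.

Lemma pauli_biclifford P : is_pauli P -> biclifford P.
Proof. by move=> pP; split; apply: pauli_clifford; last apply: pauli_adj. Qed.

Lemma clifford_hier k U : clifford U -> hier_aux k.+1 U.
Proof.
elim: k U => // k IH U cU; split=> [|P pP]; first exact: clifford_unitary.
exact: IH (pauli_clifford (clifford_conj_pauli cU pP)).
Qed.

Lemma hier_conj k K W : biclifford K -> hier_aux k W -> hier_aux k (K *m W *m adj K).
Proof.
move=> [cK cK']; elim: k W => [|k IH] W /=; first exact: clifford_conj_pauli.
move=> [uW hW]; split=> [|P pP].
  exact: unitaryM (unitaryM (clifford_unitary cK) uW) (clifford_unitary cK').
have -> : K *m W *m adj K *m P *m adj (K *m W *m adj K)
          = K *m (W *m (adj K *m P *m adj (adj K)) *m adj W) *m adj K.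
  by rewrite !adjM !adjK !mulmxA.
exact: IH (hW _ (clifford_conj_pauli cK' pP)).
Qed.

Lemma hier_mull k K W : biclifford K -> hier_aux k.+1 W -> hier_aux k.+1 (K *m W).
Proof.
move=> bK [uW hW]; split=> [|P pP]; first exact: unitaryM (clifford_unitary bK.1) uW.
rewrite adjM (_ : _ *m _ *m _ = K *m (W *m P *m adj W) *m adj K);
  last by rewrite !mulmxA.
exact: hier_conj bK (hW P pP).
Qed.

Lemma hier_mulr k K W : clifford K -> hier_aux k.+1 W -> hier_aux k.+1 (W *m K).
Proof.
move=> cK [uW hW]; split=> [|P pP]; first exact: unitaryM uW (clifford_unitary cK).
rewrite adjM (_ : _ *m _ *m _ = W *m (K *m P *m adj K) *m adj W);
  last by rewrite !mulmxA.
exact: hW _ (clifford_conj_pauli cK pP).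
Qed.

End CliffordGroup.

Section Controlled.
Variables (C : numClosedFieldType) (n : nat).
Implicit Types K M P Q R U : 'M[C]_(2 ^ n).

Definition id_kron K : 'M[C]_(2 ^ n.+1) := blk K 0 0 K.

Lemma id_kronE K : id_kron K = kron2 (sigma C pI) K.
Proof. by rewrite /kron2 /sigma /=; mx_simpl. Qed.

Lemma id_kron_mul K M : id_kron K *m id_kron M = id_kron (K *m M).
Proof. by rewrite /id_kron blk_mul; mx_simpl. Qed.

Lemma id_kron_adj K : adj (id_kron K) = id_kron (adj K).
Proof. by rewrite /id_kron blk_adj; mx_simpl. Qed.

Lemma id_kron1 : id_kron 1%:M = 1%:M.
Proof. exact: blk1. Qed.

Lemma id_kron_clifford K : clifford K -> clifford (id_kron K).
Proof.
move=> cK; split=> [|P /pauliSP [k [M [pM ->]]]].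
  by rewrite /unitary id_kron_adj id_kron_mul (clifford_unitary cK) id_kron1.
rewrite /= id_kron_adj !id_kronE !kron2_mul (eq_kron2 _ (mul2_sigmaIr _)).
by rewrite (eq_kron2 _ (mul2_sigmaIl _)); apply/pauli_kron2/clifford_conj_pauli.
Qed.

Lemma id_kron_biclifford K : biclifford K -> biclifford (id_kron K).
Proof. by move=> [cK cK']; split; rewrite ?id_kron_adj; apply: id_kron_clifford. Qed.

Lemma kron2_pauli1 k : is_pauli (kron2 (sigma C k) (1%:M : 'M[C]_(2 ^ n))).
Proof. exact/pauli_kron2/pauli1. Qed.

Lemma kron2_sigma_sqr k :
  kron2 (sigma C k) (1%:M : 'M[C]_(2 ^ n)) *m kron2 (sigma C k) 1%:M = 1%:M.
Proof. by rewrite kron2_mul mul1mx (eq_kron2 _ (sigma_sqr C k)) kron2_1. Qed.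

Lemma ctrl_adj U : adj (ctrl U) = ctrl (adj U).
Proof. by rewrite !ctrlE blk_adj; mx_simpl. Qed.

Lemma ctrl_mul U V : ctrl U *m ctrl V = ctrl (U *m V).
Proof. by rewrite !ctrlE blk_mul; mx_simpl. Qed.

Lemma ctrl_unitary U : unitary U -> unitary (ctrl U).
Proof. by rewrite /unitary ctrl_adj ctrl_mul => ->; rewrite ctrlE blk1. Qed.

Lemma ctrl_conj_kron2 U A M :
  ctrl U *m kron2 A M *m adj (ctrl U) =
  blk (A false false *: M) (A false true *: (M *m adj U))
      (A true false *: (U *m M)) (A true true *: (U *m M *m adj U)).
Proof.
rewrite ctrl_adj !ctrlE /kron2 !blk_mul; mx_simpl.
by congr blk; rewrite ?scalemxAl ?scalemxAr // -scalemxAr scalemxAl.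
Qed.

Lemma pauli_blk_diag (b : bool) M : is_pauli M -> is_pauli (blk M 0 0 ((-1) ^+ b *: M)).
Proof.
have -> : blk M 0 0 ((-1) ^+ b *: M) = kron2 (sigma C (if b then pZ else pI)) M.
  by case: b; rewrite /kron2 /sigma /=; mx_simpl.
exact: pauli_kron2.
Qed.

Lemma pauli_blk_offdiag (b : bool) R : is_pauli R -> is_pauli (blk 0 ((-1) ^+ b *: R) R 0).
Proof.
case: b => pR; last by have := pauli_kron2 pX pR; rewrite /kron2 /sigma /=; mx_simpl.
have := pauli_kron2 pY (pauli_scale (is_phaseNi C) pR).
rewrite /kron2 /sigma /= !scalerA mulrNN !mulrN !mulCii opprK mul0r oppr0.
by rewrite scale0r scale1r expr1.
Qed.

Lemma ctrl_pauli_clifford P : is_pauli P -> clifford (ctrl P).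
Proof.
move=> pP; split=> [|Q /pauliSP [k [M [pM ->]]]]; first exact/ctrl_unitary/pauli_unitary.
have [r Pr] := pauli_adj_sign pP; have [s PMs] := pauli_commute pP pM.
have PMP : P *m M *m adj P = (-1) ^+ s *: M.
  by rewrite PMs -scalemxAl -mulmxA (pauli_unitary pP) mulmx1.
have MP : M *m adj P = (-1) ^+ (r (+) s) *: (P *m M).
  by rewrite Pr -scalemxAr PMs scalerA signr_addb -mulrA -signr_addb addbb mulr1.
have pPM := pauli_mul pP pM.
rewrite /= ctrl_conj_kron2 MP PMP !scalerA; case_pauli k; rewrite /sigma /=; mx_simpl.
- exact: pauli_blk_diag.
- exact: pauli_blk_offdiag.
- have := pauli_blk_offdiag (~~ (r (+) s)) (pauli_scale (is_phase_i C) pPM).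
  by rewrite !scalerA signrN !mulNr [(-1) ^+ _ * 'i]mulrC.
- have := pauli_blk_diag (~~ s) pM.
  by rewrite signrN mulN1r.
Qed.

Lemma ctrl_pauli_biclifford P : is_pauli P -> biclifford (ctrl P).
Proof.
by move=> pP; split; rewrite ?ctrl_adj; apply: ctrl_pauli_clifford; last apply: pauli_adj.
Qed.

End Controlled.

Section ControlledPowers.
Variables (C : numClosedFieldType) (n : nat).
Implicit Types Q U : 'M[C]_(2 ^ n).

Lemma ctrl_conj_kron2_diag U A : A false true = 0 -> A true false = 0 -> unitary U ->
  ctrl U *m kron2 A 1%:M *m adj (ctrl U) = kron2 A 1%:M.
Proof. by move=> A01 A10 uU; rewrite ctrl_conj_kron2 /kron2 A01 A10 !scale0r mulmx1 uU. Qed.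

Lemma ctrl_conj_kron2_offdiag U A : A false false = 0 -> A true true = 0 -> unitary U ->
  ctrl U *m kron2 A 1%:M *m adj (ctrl U) = id_kron (adj U) *m ctrl (U *m U) *m kron2 A 1%:M.
Proof.
move=> A00 A11 uU; rewrite ctrl_conj_kron2 ctrlE /id_kron /kron2 !blk_mul A00 A11; mx_simpl.
by rewrite mulmxA (unitaryV uU) mul1mx -!scalemxAr !mulmx1.
Qed.

Lemma ctrl_conj_id_kron U Q : unitary Q ->
  ctrl U *m id_kron Q *m adj (ctrl U) = id_kron Q *m ctrl (adj Q *m (U *m Q *m adj U)).
Proof.
move=> uQ; rewrite id_kronE ctrl_conj_kron2 /sigma /= ctrlE /id_kron blk_mul; mx_simpl.
by rewrite mulmxA uQ mul1mx.
Qed.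

Lemma pauli_split (P : 'M[C]_(2 ^ n.+1)) : is_pauli P ->
  exists k Q, is_pauli Q /\ P = kron2 (sigma C k) 1%:M *m id_kron Q.
Proof.
move=> /pauliSP [k [Q [pQ ->]]]; exists k, Q; split=> //.
by rewrite id_kronE kron2_mul mul1mx (eq_kron2 _ (mul2_sigmaIr _)).
Qed.

Lemma pauli_of_ctrl_clifford U : unitary U -> clifford (ctrl U) -> is_pauli U.
Proof.
move=> uU cCU; have := clifford_conj_pauli cCU (kron2_pauli1 C n pX).
rewrite ctrl_conj_kron2 /sigma /=; mx_simpl.
move=> /pauliSP [k [M [pM /blk_inj [M0 _ UM _]]]]; move: M0 UM.
case_pauli k; rewrite /sigma /= ?scale1r => M0 ->.
- by have := pauli_neq0 pM; rewrite -M0 eqxx.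
- by [].
- exact: pauli_scale (is_phase_i C) pM.
- by have := pauli_neq0 pM; rewrite -M0 eqxx.
Qed.

Lemma hier_ctrl_sqr j U : biclifford U ->
  hier_aux j.+1 (ctrl (U *m U)) -> hier_aux j.+2 (ctrl U).
Proof.
move=> [cU cU'] hUU; have uU := clifford_unitary cU.
split=> [|P /pauli_split [k [Q [pQ ->]]]]; first exact: ctrl_unitary.
rewrite unitary_conjM; last exact: ctrl_unitary.
rewrite ctrl_conj_id_kron; last exact: pauli_unitary.
set R := adj Q *m (U *m Q *m adj U).
have bD : biclifford (id_kron Q *m ctrl R).
  apply: biclifford_mul.
    by apply: pauli_biclifford; rewrite id_kronE; apply: pauli_kron2.
  exact/ctrl_pauli_biclifford/pauli_mul/(clifford_conj_pauli cU pQ)/pauli_adj.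
have cX := pauli_clifford (kron2_pauli1 C n k).
case: (sigma_diag_or_offdiag C k) => [[A01 A10] | [A00 A11]].
  by rewrite ctrl_conj_kron2_diag //; apply/clifford_hier/clifford_mul/bD.1.
rewrite ctrl_conj_kron2_offdiag // -!mulmxA.
apply: hier_mull; first by apply: id_kron_biclifford; apply: biclifford_adj.
by apply: hier_mulr hUU; apply: clifford_mul cX bD.1.
Qed.

Lemma hier_ctrl_sqrV j U : biclifford U ->
  hier_aux j.+2 (ctrl U) -> hier_aux j.+1 (ctrl (U *m U)).
Proof.
move=> bU [_ hCU]; have uU := clifford_unitary bU.1.
have cX := pauli_clifford (kron2_pauli1 C n pX).
have := hCU _ (kron2_pauli1 C n pX); rewrite ctrl_conj_kron2_offdiag // => h.
have := hier_mulr cX (hier_mull (id_kron_biclifford bU) h).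
by rewrite !mulmxA id_kron_mul uU id_kron1 mul1mx -mulmxA kron2_sigma_sqr mulmx1.
Qed.

Lemma mxpow_sqr d (U : 'M[C]_d) e : mxpow (U *m U) e = mxpow U e.*2.
Proof. by elim: e => // e IH; rewrite doubleS /mxpow /= -/(mxpow _ _) IH mulmxA. Qed.

Lemma clifford_mxpow U e : clifford U -> clifford (mxpow U e).
Proof.
by move=> cU; elim: e => [|e IH]; [apply/pauli_clifford/pauli1 | apply: clifford_mul].
Qed.

(* U† = U^e (U^(e+1))†, a product of Clifford operators. *)
Lemma clifford_adj_of_pauli_pow U e :
  clifford U -> is_pauli (mxpow U e.+1) -> clifford (adj U).
Proof.
move=> cU pUe; have -> : adj U = mxpow U e *m adj (mxpow U e.+1).
  rewrite -[adj U]mulmx1 -(pauli_unitary pUe) /mxpow /= -/(mxpow U e).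
  by rewrite !mulmxA (unitaryV (clifford_unitary cU)) mul1mx.
exact/clifford_mul/pauli_clifford/pauli_adj/pUe/clifford_mxpow.
Qed.

Lemma hier_ctrlP j U : biclifford U ->
  hier_aux j.+1 (ctrl U) <-> is_pauli (mxpow U (2 ^ j)).
Proof.
elim: j U => [|j IH] U bU.
  rewrite expn0 /mxpow /= mulmx1; split; last exact: ctrl_pauli_clifford.
  exact: pauli_of_ctrl_clifford (clifford_unitary bU.1).
rewrite expnS mul2n -mxpow_sqr -IH; last exact: biclifford_mul.
by split; [apply: hier_ctrl_sqrV | apply: hier_ctrl_sqr].
Qed.

End ControlledPowers.

Theorem mainTheorem2 (C : numClosedFieldType) (n m : nat) (U : 'M[C]_(2 ^ n)) :
  (1 <= n)%N -> (1 <= m)%N ->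
  in_clifford_hierarchy 2 U ->
  pauli_periodicity U m ->
  in_clifford_hierarchy (m + 2) (ctrl U) /\ ~ in_clifford_hierarchy (m + 1) (ctrl U).
Proof.
move=> _ m_gt0 cU [pUm minm].
have bU : biclifford U.
  split=> //; apply: (@clifford_adj_of_pauli_pow _ _ _ (2 ^ m).-1 cU).
  by rewrite prednK ?expn_gt0.
rewrite /in_clifford_hierarchy addn2 addn1 /=; split; first exact/(hier_ctrlP _ bU).
by case: m m_gt0 pUm minm => // m _ _ minm /(hier_ctrlP _ bU); apply: minm.
Qed.
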